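(* The set $\mathcal C=\{G\in\mathcal G:\ \overline G\text{ is algebraically closed}\}$ is comeager in $\mathcal G$.
   Context: Let $\mathbb N=\{1,2,3,\dots\}$. Equip $\mathbb N^{\mathbb N\times\mathbb N}$ with the product topology of the discrete topology on $\mathbb N$. Let $\mathcal G$ be the subspace consisting of those $A\in\mathbb N^{\mathbb N\times\mathbb N}$ that are the multiplication table of a group on the underlying set $\mathbb N$ whose identity element is $1$. For $G\in\mathcal G$, $\overline G$ denotes the group on $\mathbb N$ with multiplication table $G$. Algebraic closedness: let $F$ be the free group on $X=\{x_1,x_2,\dots\}$ and $K$ a group. A finite system $(E,I)$ consists of finite sets $E,I\subseteq F\star K$ (equations and inequations). A solution of $(E,I)$ in $K$ is a homomorphism $f:F\to K$ such that the homomorphism $\tilde f:F\star K\to K$ extending $f$ and the identity of $K$ maps every element of $E$ to $1$ and no element of $I$ to $1$. The system is consistent with $K$ if there is a group $L$ and an embedding $h:K\to L$ such that the image of $(E,I)$ under the homomorphism $F\star K\to F\star L$ extending $h$ and $\mathrm{id}_F$ has a solution in $L$. $K$ is algebraically closed if every finite system $(E,I)$ consistent with $K$ has a solution in $K$. *)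

From Stdlib Require Import List.
Import ListNotations.

Definition IsGroup (T : Type) (mul : T -> T -> T) (one : T) (inv : T -> T) : Prop :=
  (forall a b c, mul a (mul b c) = mul (mul a b) c) /\
  (forall a, mul one a = a) /\ (forall a, mul a one = a) /\
  (forall a, mul a (inv a) = one) /\ (forall a, mul (inv a) a = one).

(** * Elements of the free product F * K, F free on X = {x_0, x_1, ...}.
    Every element of F * K is the product of a finite word whose letters are
    generators x_i, their inverses, or constants from K. *)
Inductive letter (K : Type) : Type :=
| Var : nat -> bool -> letter K   (* Var i true = x_i, Var i false = x_i^-1 *)
| Cst : K -> letter K.
Arguments Var {K} _ _.
Arguments Cst {K} _.

Definition word (K : Type) := list (letter K).

(** This is the image of the word under
    the homomorphism F * K -> L extending g on F and c on K. *)
Definition eval_word {K L : Type} (mulL : L -> L -> L) (oneL : L) (invL : L -> L)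
  (g : nat -> L) (c : K -> L) (w : word K) : L :=
  fold_right (fun l acc =>
     mulL (match l with
           | Var i true => g i
           | Var i false => invL (g i)
           | Cst k => c k end) acc) oneL w.

Definition solves {K L : Type} (mulL : L -> L -> L) (oneL : L) (invL : L -> L)
  (c : K -> L) (E I : list (word K)) (g : nat -> L) : Prop :=
  (forall e, In e E -> eval_word mulL oneL invL g c e = oneL) /\
  (forall i, In i I -> eval_word mulL oneL invL g c i <> oneL).

Definition consistent {K : Type} (mulK : K -> K -> K) (E I : list (word K)) : Prop :=
  exists (L : Type) (mulL : L -> L -> L) (oneL : L) (invL : L -> L) (h : K -> L),
    IsGroup L mulL oneL invL /\
    (forall a b, h (mulK a b) = mulL (h a) (h b)) /\
    (forall a b, h a = h b -> a = b) /\
    exists g : nat -> L, solves mulL oneL invL h E I g.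

Definition algebraically_closed {K : Type} (mulK : K -> K -> K) (oneK : K) (invK : K -> K)
  : Prop :=
  forall E I : list (word K), consistent mulK E I ->
    exists g : nat -> K, solves mulK oneK invK (fun k => k) E I g.

(** * The space of group tables.
    READING: the underlying set N = {1,2,...} is relabelled as nat via
    n |-> n - 1; thus the identity 1 becomes 0 and a table is nat -> nat -> nat. *)
Definition table := nat -> nat -> nat.

Definition in_G (A : table) : Prop := exists inv : nat -> nat, IsGroup nat A 0 inv.

Definition in_C (A : table) : Prop :=
  exists inv : nat -> nat, IsGroup nat A 0 inv /\ algebraically_closed A 0 inv.

(** Basic neighbourhoods of the product topology: agreement on [0,n)x[0,n). *)
Definition agree (n : nat) (A B : table) : Prop :=
  forall i j, i < n -> j < n -> A i j = B i j.

Definition openG (U : table -> Prop) : Prop :=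
  (forall A, U A -> in_G A) /\
  (forall A, U A -> exists n, forall B, in_G B -> agree n A B -> U B).

Definition denseG (U : table -> Prop) : Prop :=
  forall A n, in_G A -> exists B, in_G B /\ agree n A B /\ U B.

Definition comeagerG (S : table -> Prop) : Prop :=
  exists D : nat -> table -> Prop,
    (forall k, openG (D k) /\ denseG (D k)) /\
    (forall A, in_G A -> (forall k, D k A) -> S A).

From Stdlib Require Import List Lia.
From HB Require Import structures.
From mathcomp Require Import all_boot zify.
From mathcomp Require Import boolp classical_sets cardinality.

(* For a finite system s with constants in N, the tables in which s has a
   solution form an open set U_s: a solution only consults finitely many entries
   of the table. So U_s together with the interior of its complement is a dense
   open set D_s, and there are countably many s. Let G lie in every D_s and let s
   be consistent with G, solved in some L into which G embeds. Every basic
   neighbourhood of G then meets U_s: the countable subgroup of L generated by G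
   and the solution can be labelled by N so that the labelling extends that of G
   on any prescribed finite set, giving a nearby table in which s is solvable.
   Hence G is not in the interior of the complement of U_s, so G lies in U_s. *)

Local Open Scope classical_set_scope.

Section GroupFacts.
Context {T : Type} {mul : T -> T -> T} {one : T} {inv : T -> T}.
Hypothesis GT : IsGroup T mul one inv.

Lemma group_mulI a b c : mul a b = mul a c -> b = c.
Proof.
case: GT => [mulA [mul1g [_ [_ mulVg]]]] eq_ab_ac.
by rewrite -(mul1g b) -(mul1g c) -(mulVg a) -!mulA eq_ab_ac.
Qed.

Lemma group_inv_uniq a b : mul a b = one -> b = inv a.
Proof. by case: GT => [_ [_ [_ [mulgV _]]]] ab1; apply: (group_mulI a); rewrite ab1 mulgV. Qed.

Lemma group_invM a b : inv (mul a b) = mul (inv b) (inv a).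
Proof.
case: GT => [mulA [mul1g [_ [mulgV _]]]].
by symmetry; apply: group_inv_uniq; rewrite -mulA (mulA b) mulgV mul1g mulgV.
Qed.

Lemma group_invK a : inv (inv a) = a.
Proof. by case: GT => [_ [_ [_ [_ mulVg]]]]; symmetry; apply: group_inv_uniq. Qed.

Lemma group_idem_eq1 a : mul a a = a -> a = one.
Proof. by case: GT => [_ [_ [mulg1 _]]] aa; apply: (group_mulI a); rewrite aa mulg1. Qed.

Lemma group_inv_eq {inv'} : IsGroup T mul one inv' -> inv' = inv.
Proof.
case=> [_ [_ [_ [mulgV' _]]]].
by apply: funext => a; apply: group_inv_uniq; rewrite mulgV'.
Qed.

End GroupFacts.

Lemma eval_word_cons {C L : Type} mulL (oneL : L) invL g (c : C -> L) l w :
  eval_word mulL oneL invL g c (l :: w) =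
  mulL (match l with Var i true => g i | Var i false => invL (g i) | Cst k => c k end)
       (eval_word mulL oneL invL g c w).
Proof. by []. Qed.

Lemma eq_eval_word_cst {C L : Type} mulL (oneL : L) invL g (c c' : C -> L) w :
  (forall k, In (Cst k) w -> c k = c' k) ->
  eval_word mulL oneL invL g c w = eval_word mulL oneL invL g c' w.
Proof.
elim: w => [//|l w IH] eq_cc'; rewrite !eval_word_cons IH => [|k wk]; last first.
  by apply: eq_cc'; right.
by case: l eq_cc' => [i b|k] // eq_cc'; rewrite eq_cc' //; left.
Qed.

Section Homomorphisms.
Context {K L : Type} {mulK : K -> K -> K} {oneK : K} {invK : K -> K}
  {mulL : L -> L -> L} {oneL : L} {invL : L -> L}.
Hypotheses (GK : IsGroup K mulK oneK invK) (GL : IsGroup L mulL oneL invL).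
Context {f : K -> L}.
Hypothesis fM : forall a b, f (mulK a b) = mulL (f a) (f b).

Lemma hom1 : f oneK = oneL.
Proof. by case: GK => [_ [mul1g _]]; apply: (group_idem_eq1 GL); rewrite -fM mul1g. Qed.

Lemma homV a : f (invK a) = invL (f a).
Proof.
case: GK => [_ [_ [_ [mulgV _]]]].
by apply: (group_inv_uniq GL); rewrite -fM mulgV hom1.
Qed.

Lemma hom_eval_word {C : Type} g (c : C -> K) w :
  f (eval_word mulK oneK invK g c w) = eval_word mulL oneL invL (f \o g) (f \o c) w.
Proof.
elim: w => [|l w IH]; first exact: hom1.
by rewrite !eval_word_cons fM IH; case: l => [i []|k] //=; rewrite homV.
Qed.

End Homomorphisms.

Definition letter_inv {K : Type} (invK : K -> K) (l : letter K) : letter K :=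
  match l with Var i b => Var i (~~ b) | Cst k => Cst (invK k) end.

Definition word_inv {K : Type} (invK : K -> K) (w : word K) : word K :=
  rev (map (letter_inv invK) w).

Section WordValues.
Context {K L : Type} {invK : K -> K} {mulL : L -> L -> L} {oneL : L} {invL : L -> L}.
Hypothesis GL : IsGroup L mulL oneL invL.
Context {g : nat -> L} {c : K -> L}.
Hypothesis cV : forall k, c (invK k) = invL (c k).
Local Notation ev := (eval_word mulL oneL invL g c).

Lemma eval_word_cat w1 w2 : ev (w1 ++ w2) = mulL (ev w1) (ev w2).
Proof.
case: GL => [mulA [mul1g _]].
elim: w1 => [|l w1 IH]; first by rewrite /= mul1g.
by rewrite cat_cons !eval_word_cons IH mulA.
Qed.

Lemma eval_word1 l :
  ev [:: l] = match l with Var i true => g i | Var i false => invL (g i) | Cst k => c k end.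
Proof. by case: GL => [_ [_ [mulg1 _]]]; rewrite eval_word_cons mulg1. Qed.

Lemma eval_word_inv w : ev (word_inv invK w) = invL (ev w).
Proof.
elim: w => [|l w IH].
  by case: GL => [_ [mul1g [_ [mulgV _]]]]; rewrite -[RHS]mul1g mulgV.
rewrite /word_inv map_cons rev_cons -cats1 eval_word_cat -/(word_inv _ _) IH.
rewrite eval_word1 (eval_word_cons _ _ _ _ _ l w) (group_invM GL).
by case: l => [i [] | k] //=; rewrite ?(group_invK GL) ?cV.
Qed.

Lemma range_eval_wordM {x y} : range ev x -> range ev y -> range ev (mulL x y).
Proof. by move=> [w _ <-] [v _ <-]; exists (w ++ v); rewrite ?eval_word_cat. Qed.

Lemma range_eval_wordV {x} : range ev x -> range ev (invL x).
Proof. by move=> [w _ <-]; exists (word_inv invK w); rewrite ?eval_word_inv. Qed.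

End WordValues.

Definition letter_code {K : Type} (l : letter K) : (nat * bool) + K :=
  match l with Var i b => inl (i, b) | Cst k => inr k end.

Definition letter_decode {K : Type} (c : (nat * bool) + K) : letter K :=
  match c with inl (i, b) => Var i b | inr k => Cst k end.

Lemma letter_codeK {K : Type} : cancel (@letter_code K) letter_decode.
Proof. by case. Qed.

HB.instance Definition _ (K : countType) :=
  Countable.copy (letter K) (can_type letter_codeK).

Lemma countable_infinite_enum T (X : set T) : countable X -> infinite_set X ->
  exists psi : nat -> T, injective psi /\ range psi = X.
Proof.
move=> Xcnt Xinf; have /card_esym/card_bijP[f [f' fK f'K]] := eq_card_nat Xcnt Xinf.
pose psi n := val (f (exist _ n (mem_set (I : setT n)))).
exists psi; split=> [m n /val_inj/(can_inj fK) [] // | ].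
apply/seteqP; split=> [_ [n _ <-] | x Xx].
  by have := valP (f (exist _ n (mem_set (I : setT n)))); rewrite inE.
set y := f' (exist _ x (mem_set Xx)); exists (val y) => //; rewrite /psi.
have -> : exist _ (val y) (mem_set (I : setT (val y))) = y by exact: val_inj.
by rewrite f'K.
Qed.

Lemma countable_enum_extending {T : Type} {X : set T} {f : nat -> T} N :
  countable X -> injective f -> range f `<=` X ->
  exists th : nat -> T, [/\ injective th, range th = X & forall m, m < N -> th m = f m].
Proof.
move=> Xcnt finj fX; set Y := X `\` f @` `I_N.
have Xinf : infinite_set X.
  apply/infiniteP/(card_le_trans _ (subset_card_le fX)).
  by rewrite (card_le_eqr (inj_card_eq (in2W finj))).
have [psi [psi_inj psiY]] : exists psi : nat -> T, injective psi /\ range psi = Y.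
  apply: countable_infinite_enum; first exact: card_le_trans (card_le_setD _ _) Xcnt.
  exact: infinite_setD Xinf (finite_image _ (finite_II N)).
have psi_notf m n : m < N -> psi n <> f m.
  move=> mN psi_f; have [_] : Y (psi n) by rewrite -psiY; exists n.
  by apply; exists m.
exists (fun m => if m < N then f m else psi (m - N)); split=> [m n | | m ->] //.
  case: ltnP => mN; case: ltnP => nN.
  - exact: finj.
  - by move/esym/psi_notf.
  - by move/psi_notf.
  - by move/psi_inj; lia.
apply/seteqP; split=> [_ [m _ <-] | x Xx].
  case: ltnP => _; first by apply: fX; exists m.
  by have [] : Y (psi (m - N)) by rewrite -psiY; exists (m - N).
have [[m mN <-] | xNf] := pselect ((f @` `I_N) x).
  by exists m => //; rewrite mN.
have [n _ <-] : range psi x by rewrite psiY.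
by exists (n + N) => //; rewrite ltnNge leq_addl addnK.
Qed.

Lemma pullback_group {L : Type} {mulL : L -> L -> L} {oneL : L} {invL : L -> L}
    {th : nat -> L} :
  IsGroup L mulL oneL invL -> injective th -> th 0 = oneL ->
  (forall a b, range th (mulL (th a) (th b))) -> (forall a, range th (invL (th a))) ->
  exists B iB, IsGroup nat B 0 iB /\ forall a b, th (B a b) = mulL (th a) (th b).
Proof.
move=> [mulA [mul1g [mulg1 [mulgV mulVg]]]] th_inj th0 thM thV.
have thM' (ab : nat * nat) : exists c, th c = mulL (th ab.1) (th ab.2).
  by have [c _] := thM ab.1 ab.2; exists c.
have thV' a : exists c, th c = invL (th a) by have [c _] := thV a; exists c.
have [[B' thB'] [iB thiB]] := (choice thM', choice thV').
pose B a b := B' (a, b); have thB a b : th (B a b) = mulL (th a) (th b) := thB' (a, b).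
exists B, iB; split=> //.
by split; [|split; [|split; [|split]]] => *; apply: th_inj;
  rewrite ?thB ?thiB ?thB ?th0 ?mulA ?mul1g ?mulg1 ?mulgV ?mulVg.
Qed.

Lemma leq_bigmax_In {T : Type} (F : T -> nat) s x : In x s -> F x <= \max_(y <- s) F y.
Proof. by elim: s => [//|y s IH] /= [<- | /IH]; rewrite big_cons; lia. Qed.

Definition table_max (A : table) n : nat := \max_(i < n) \max_(j < n) A i j.

Lemma leq_table_max (A : table) {n i j} : i < n -> j < n -> A i j <= table_max A n.
Proof.
move=> lt_in lt_jn; apply: leq_trans (leq_bigmax (Ordinal lt_in)).
exact: (leq_bigmax (F := fun j : 'I_n => A i j) (Ordinal lt_jn)).
Qed.

Definition cst_max (ws : seq (word nat)) : nat :=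
  \max_(w <- ws) \max_(l <- w) (if l is Cst k then k else 0).

Lemma leq_cst_max {ws w k} : In w ws -> In (Cst k) w -> k <= cst_max ws.
Proof.
move=> wws kw; apply: leq_trans (leq_bigmax_In _ _ _ wws).
exact: (leq_bigmax_In (fun l : letter nat => if l is Cst k then k else 0) _ _ kw).
Qed.

Lemma agree_le {m n A B} : m <= n -> agree n A B -> agree m A B.
Proof. by move=> le_mn AB i j im jm; apply: AB; lia. Qed.

Lemma agree_trans {n A B C} : agree n A B -> agree n B C -> agree n A C.
Proof. by move=> AB BC i j im jm; rewrite AB // BC. Qed.

Lemma eval_word_agree {A iA} g w : IsGroup nat A 0 iA ->
  exists n, forall B iB, IsGroup nat B 0 iB -> agree n A B ->
    eval_word B 0 iB g id w = eval_word A 0 iA g id w.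
Proof.
move=> GA; elim: w => [|l w [n IH]]; first by exists 0.
set a := eval_word A 0 iA g id w.
have invE B iB x : IsGroup nat B 0 iB -> agree (x + iA x).+1 A B -> iB x = iA x.
  case: GA => [_ [_ [_ [mulgV _]]]] GB AB.
  by symmetry; apply: (group_inv_uniq GB); rewrite -AB ?mulgV //; lia.
pose bound := match l with
  | Var i true => g i + a | Var i false => g i + iA (g i) + a | Cst k => k + a end.
exists (maxn n bound.+1) => B iB GB AB.
rewrite !eval_word_cons IH -/a //; last by apply: agree_le AB; lia.
case: l @bound AB => [i [] | k] /= AB; rewrite ?(invE B iB) ?AB //;
  by [lia | apply: agree_le AB; lia].
Qed.

Lemma eval_words_agree {A iA} g ws : IsGroup nat A 0 iA ->
  exists n, forall B iB, IsGroup nat B 0 iB -> agree n A B ->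
    forall w, In w ws -> eval_word B 0 iB g id w = eval_word A 0 iA g id w.
Proof.
move=> GA; elim: ws => [|w ws [n IH]]; first by exists 0.
have [m Hm] := eval_word_agree g w GA.
exists (maxn n m) => B iB GB AB v [<- | vws].
  by apply: Hm => //; apply: agree_le AB; lia.
by apply: IH => //; apply: agree_le AB; lia.
Qed.

Definition system := (seq (word nat) * seq (word nat))%type.

Definition solvable_in (s : system) (A : table) : Prop :=
  exists iA, IsGroup nat A 0 iA /\ exists g, solves A 0 iA id s.1 s.2 g.

Lemma openG_solvable_in s : openG (solvable_in s).
Proof.
split=> [A [iA [GA _]] | A [iA [GA [g [solE solI]]]]]; first by exists iA.
have [n agreeE] := eval_words_agree g (s.1 ++ s.2)%list GA.
exists n => B [iB GB] AB; exists iB; split => //; exists g; split => [e eE | i iI].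
  by rewrite agreeE ?solE //; apply: in_or_app; left.
by rewrite agreeE //; [apply: solI | apply: in_or_app; right].
Qed.

Definition exteriorG (U : set table) : set table :=
  fun A => in_G A /\ exists n, forall B, in_G B -> agree n A B -> ~ U B.

Lemma openG_exteriorG U : openG (exteriorG U).
Proof.
split=> [A [] // | A [GA [n notU]]].
exists n => B GB AB; split => //; exists n => C GC BC.
exact: notU GC (agree_trans AB BC).
Qed.

Lemma openG_setU U V : openG U -> openG V -> openG (U `|` V).
Proof.
move=> [UG Uopen] [VG Vopen]; split=> [A [/UG | /VG] // | A [/Uopen | /Vopen] [n nbhd]].
  by exists n => B GB AB; left; apply: nbhd.
by exists n => B GB AB; right; apply: nbhd.
Qed.

Lemma denseG_setU_exteriorG U : denseG (U `|` exteriorG U).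
Proof.
move=> A n GA; have [[B [GB [AB UB]]] | noU] :=
  pselect (exists B, in_G B /\ agree n A B /\ U B).
  by exists B; split => //; split => //; left.
exists A; split => //; split => //; right; split => //.
by exists n => B GB AB UB; apply: noU; exists B.
Qed.

Lemma consistent_solvable_near {A iA E I} n : IsGroup nat A 0 iA -> consistent A E I ->
  exists B, in_G B /\ agree n A B /\ solvable_in (E, I) B.
Proof.
move=> GA [L [mulL [oneL [invL [h [GL [hM [h_inj [g [solE solI]]]]]]]]]].
pose ev := eval_word mulL oneL invL g h.
have h0 : h 0 = oneL := hom1 GA GL hM.
(* Labels below N keep their meaning in A: they cover the entries of A seen by
   [agree n] and all constants of the system. *)
pose N := (n + table_max A n + cst_max (E ++ I)%list).+1.
have h_ev : range h `<=` range ev by move=> _ [k _ <-]; exists [:: Cst k] => //; apply: eval_word1.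
have [th [th_inj th_range th_h]] := countable_enum_extending N
  (card_le_trans (card_image_le ev _) (countableP _)) h_inj h_ev.
have th0 : th 0 = oneL by rewrite th_h.
have th_ev a : range ev (th a) by rewrite -th_range; exists a.
have [B [iB [GB thB]]] : exists B iB, IsGroup nat B 0 iB /\
    forall a b, th (B a b) = mulL (th a) (th b).
  apply: (pullback_group GL th_inj th0) => [a b | a]; rewrite th_range.
    exact: (range_eval_wordM GL (th_ev a) (th_ev b)).
  exact: (range_eval_wordV GL (homV GA GL hM) (th_ev a)).
have g_th i : exists c, th c = g i.
  have [c _ <-] : range th (g i).
    by rewrite th_range; exists [:: Var i true] => //; apply: eval_word1.
  by exists c.
have [g' thg'] := choice g_th.
have th_eval w : In w (E ++ I)%list -> th (eval_word B 0 iB g' id w) = ev w.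
  move=> wEI; rewrite (hom_eval_word GB GL thB) (_ : th \o g' = g); last exact: funext.
  apply: eq_eval_word_cst => k kw /=; apply: th_h.
  by have := leq_cst_max wEI kw; lia.
exists B; split; first by exists iB.
split=> [i j /ltP lt_in /ltP lt_jn | ].
  apply: (th_inj); rewrite thB !th_h ?hM //; try lia.
  by have := leq_table_max A lt_in lt_jn; lia.
exists iB; split=> //; exists g'; split=> [e eE | e eI].
  by apply: th_inj; rewrite th_eval ?th0; [apply: solE | apply: in_or_app; left].
by move=> /(congr1 th); rewrite th_eval ?th0; [apply: solI | apply: in_or_app; right].
Qed.

Theorem theorem6p1 : comeagerG in_C.
Proof.
pose D s := solvable_in s `|` exteriorG (solvable_in s).
exists (fun k => D (odflt ([::], [::]) (unpickle k))); split=> [k | A [iA GA] DA].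
  split; last exact: denseG_setU_exteriorG.
  exact/openG_setU/openG_exteriorG/openG_solvable_in.
exists iA; split=> // E I EIcons.
have := DA (pickle ((E, I) : system)); rewrite pickleK => -[[iA' [GA' [g sol]]] | [_ [n noSol]]].
  by exists g; rewrite -(group_inv_eq GA GA').
have [B [GB [AB solB]]] := consistent_solvable_near n GA EIcons.
by case: (noSol B GB AB solB).
Qed.
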